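(* Let $(G,* )$ be a topological group with the Hurewicz property. Then $G$ has ${\sf S}_c(\mathcal{O}_{\sf nbd},\mathcal{O})$ if and only if $G$ has ${\sf S}_c(\mathcal{O},\mathcal{O})$.
   Context: For a topological group $(G,* )$ with identity $e$ and a neighborhood $U$ of $e$, let $\mathcal{O}(U)=\{x*U: x\in G\}$ and $\mathcal{O}_{\sf nbd}=\{\mathcal{O}(U): U \text{ a neighborhood of } e\}$. $\mathcal{O}$ denotes the collection of all open covers of $G$. A family $\mathcal{B}$ refines $\mathcal{A}$ if every member of $\mathcal{B}$ is contained in some member of $\mathcal{A}$. ${\sf S}_c(\mathcal{A},\mathcal{B})$: for each sequence $(A_n:n<\infty)$ of elements of $\mathcal{A}$ there is a sequence $(B_n:n<\infty)$ such that each $B_n$ is a pairwise disjoint family of open sets refining $A_n$ and $\bigcup_{n}B_n\in\mathcal{B}$. A space $X$ has the Hurewicz property if for each sequence $(\mathcal{U}_n:n<\infty)$ of open covers of $X$ there are finite $\mathcal{F}_n\subseteq\mathcal{U}_n$ such that for each $x\in X$ the set $\{n: x\notin\bigcup\mathcal{F}_n\}$ is finite. *)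

From Stdlib Require Import List Arith.
Import ListNotations.

Record TopGroup := {
  carrier :> Type;
  op : carrier -> carrier -> carrier;
  inv : carrier -> carrier;
  e : carrier;
  open : (carrier -> Prop) -> Prop;
  op_assoc : forall x y z, op x (op y z) = op (op x y) z;
  op_e_l : forall x, op e x = x;
  op_inv_l : forall x, op (inv x) x = e;
  open_full : open (fun _ => True);
  open_empty : open (fun _ => False);
  open_inter : forall U V, open U -> open V -> open (fun x => U x /\ V x);
  open_union : forall (F : (carrier -> Prop) -> Prop),
      (forall U, F U -> open U) -> open (fun x => exists U, F U /\ U x);
  op_cont : forall (W : carrier -> Prop) x y, open W -> W (op x y) ->
      exists U V, open U /\ open V /\ U x /\ V y /\
        (forall a b, U a -> V b -> W (op a b));
  inv_cont : forall (W : carrier -> Prop) x, open W -> W (inv x) ->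
      exists U, open U /\ U x /\ (forall a, U a -> W (inv a))
}.

Section Defs.
Variable G : TopGroup.

Definition set := G -> Prop.
Definition family := set -> Prop.

Definition nbd_e (U : set) : Prop :=
  exists V, open G V /\ V (e G) /\ (forall x, V x -> U x).

Definition lcoset (x : G) (U : set) : set :=
  fun y => exists u, U u /\ y = op G x u.

Definition OU (U : set) : family :=
  fun V => exists x, forall y, V y <-> lcoset x U y.

Definition O_nbd (A : family) : Prop :=
  exists U, nbd_e U /\ (forall V, A V <-> OU U V).

Definition open_cover (A : family) : Prop :=
  (forall V, A V -> open G V) /\ (forall x, exists V, A V /\ V x).

Definition refines (B A : family) : Prop :=
  forall V, B V -> exists W, A W /\ (forall x, V x -> W x).

Definition pairwise_disjoint (B : family) : Prop :=
  forall V W, B V -> B W -> (exists x, V x /\ W x) -> (forall x, V x <-> W x).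

Definition Sc (clsA clsB : family -> Prop) : Prop :=
  forall A : nat -> family, (forall n, clsA (A n)) ->
    exists Bs : nat -> family,
      (forall n, pairwise_disjoint (Bs n) /\
                 (forall V, Bs n V -> open G V) /\
                 refines (Bs n) (A n)) /\
      clsB (fun V => exists n, Bs n V).

Definition Hurewicz : Prop :=
  forall U : nat -> family, (forall n, open_cover (U n)) ->
    exists F : nat -> list set,
      (forall n V, In V (F n) -> U n V) /\
      (forall x, exists N, forall n, N <= n -> exists V, In V (F n) /\ V x).

End Defs.

(* The implication S_c(O, O) -> S_c(O_nbd, O) needs no Hurewicz hypothesis:
   a cover x*U (U a neighborhood of e) contains the open cover x*V (V open,
   e in V, V inside U), and refinements of the latter refine the former.

   For the converse, given open covers A_n, pick for every n and point x a
   member W of A_n containing x and an open neighborhood V_{n,x} of e with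
   x*V*V inside W.  The Hurewicz property, applied to the covers
   {x*V_{n,x}}, yields finite sets P_n of points such that every y lies in
   X_n = U_{x in P_n} x*V_{n,x} for all large n.  With V'_n the (finite)
   intersection of the V_{n,x}, x in P_n, choose U_n with U_n^-1 U_n inside
   V'_n.  A diagonal use of S_c(O_nbd, O) (lemma [Sc_nbd_eventually]) gives
   disjoint refinements B_n of the covers {x*U_n} whose members meet X_n and
   whose union covers G.  A set S inside some x'*U_n meeting x*V_{n,x}
   (x in P_n) lies inside x*V_{n,x}*V_{n,x}, hence in a member of A_n. *)
From Stdlib Require Import List Lia Cantor.
From Stdlib Require Import FunctionalExtensionality PropExtensionality IndefiniteDescription.
Import ListNotations.

Section TopGroupFacts.
Variable G : TopGroup.

Local Notation "x * y" := (op G x y).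

Definition open_nbd_e (V : set G) : Prop := open G V /\ V (e G).

Lemma op_inv_r (x : G) : x * inv G x = e G.
Proof.
  rewrite <- (op_e_l G (x * inv G x)).
  rewrite <- (op_inv_l G (inv G x)) at 1.
  rewrite <- op_assoc, (op_assoc G (inv G x) x (inv G x)), op_inv_l, op_e_l.
  apply op_inv_l.
Qed.

Lemma op_e_r (x : G) : x * e G = x.
Proof. rewrite <- (op_inv_l G x), op_assoc, op_inv_r. apply op_e_l. Qed.

Lemma open_ext (U V : set G) : open G U -> (forall x, U x <-> V x) -> open G V.
Proof.
  intros HU H. replace V with U; auto.
  apply functional_extensionality; intro x; apply propositional_extensionality; auto.
Qed.

Lemma open_list_inter (P : list G) (f : G -> set G) :
  (forall x, open G (f x)) -> open G (fun a => forall x, In x P -> f x a).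
Proof.
  intros Hf. induction P as [|x0 P IH].
  - apply open_ext with (fun _ => True); [apply open_full | simpl; tauto].
  - apply open_ext with (fun a => f x0 a /\ (forall x, In x P -> f x a)).
    + apply open_inter; auto.
    + intro a; simpl; split.
      * intros [H1 H2] x [<-|Hx]; auto.
      * intros H; split; auto.
Qed.

Lemma lcoset_open (x : G) (V : set G) : open G V -> open G (lcoset G x V).
Proof.
  intros HV.
  apply open_ext with
    (fun y => exists O, (open G O /\ forall b, O b -> lcoset G x V b) /\ O y).
  - apply open_union. intros U [HU _]; exact HU.
  - intro y; split.
    + intros [O [[_ H] Oy]]; auto.
    + intros [u [Vu Hy]].
      destruct (op_cont G V (inv G x) y HV) as [U1 [V1 [_ [HV1 [U1x [V1y H1]]]]]].
      { rewrite Hy, op_assoc, op_inv_l, op_e_l; auto. }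
      exists V1; repeat split; auto.
      intros b Hb. exists (inv G x * b). split; auto.
      rewrite op_assoc, op_inv_r, op_e_l; auto.
Qed.

(* Continuity of multiplication at (x,e,e): every open W containing x
   contains x*V*V for some open neighborhood V of e. *)
Lemma nbd_triple (x : G) (W : set G) : open G W -> W x ->
  exists V, open_nbd_e V /\ forall a b, V a -> V b -> W ((x * a) * b).
Proof.
  intros HW Wx.
  destruct (op_cont G W (x * e G) (e G) HW) as [U1 [V1 [HU1 [HV1 [U1x [V1e H1]]]]]].
  { rewrite !op_e_r; auto. }
  destruct (op_cont G U1 x (e G) HU1 U1x) as [U2 [V2 [HU2 [HV2 [U2x [V2e H2]]]]]].
  exists (fun a => V1 a /\ V2 a). split; [split; [apply open_inter|]; auto|].
  intros a b [Ha1 Ha2] [Hb1 Hb2]. apply H1; auto.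
Qed.

(* Continuity of (u0,u) |-> u0^-1 u at (e,e): every open neighborhood V
   of e contains U^-1 U for some open neighborhood U of e. *)
Lemma nbd_quotient (V : set G) : open_nbd_e V ->
  exists U, open_nbd_e U /\ forall u0 u, U u0 -> U u -> V (inv G u0 * u).
Proof.
  intros [HV Ve].
  destruct (op_cont G V (inv G (e G)) (e G) HV) as [U1 [V1 [HU1 [HV1 [U1x [V1e H1]]]]]].
  { rewrite op_inv_l; auto. }
  destruct (inv_cont G U1 (e G) HU1 U1x) as [U2 [HU2 [U2e H2]]].
  exists (fun a => U2 a /\ V1 a). split; [split; [apply open_inter|]; auto|].
  intros u0 u [? ?] [? ?]. apply H1; auto.
Qed.

Lemma lcoset_quotient (x z v : G) (U : set G) :
  lcoset G x U z -> lcoset G x U v ->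
  exists u0 u, U u0 /\ U u /\ v = z * (inv G u0 * u).
Proof.
  intros [u0 [Uu0 ->]] [u [Uu ->]]. exists u0, u. repeat split; auto.
  rewrite <- (op_assoc G x u0), (op_assoc G u0 (inv G u0) u), op_inv_r, op_e_l.
  reflexivity.
Qed.

Definition coset_cover (V : G -> set G) : family G :=
  fun S => exists x, S = lcoset G x (V x).

Lemma coset_cover_open_cover (V : G -> set G) :
  (forall x, open_nbd_e (V x)) -> open_cover G (coset_cover V).
Proof.
  intros HV. split.
  - intros S [x ->]. apply lcoset_open, HV.
  - intro y. exists (lcoset G y (V y)). split; [exists y; reflexivity|].
    exists (e G). split; [apply HV | symmetry; apply op_e_r].
Qed.

Lemma Sc_nbd_of_Sc_open :
  Sc G (open_cover G) (open_cover G) -> Sc G (O_nbd G) (open_cover G).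
Proof.
  intros Hoo A HA.
  assert (Hshrink : forall n, exists UV : set G * set G,
    (forall S, A n S <-> OU G (fst UV) S) /\ open_nbd_e (snd UV) /\
    (forall x, snd UV x -> fst UV x)).
  { intro n. destruct (HA n) as [U [[V [HV [Ve VU]]] HAU]].
    exists (U, V); simpl; split; [exact HAU | split; [split|]; auto]. }
  destruct (functional_choice _ Hshrink) as [f Hf]. clear Hshrink.
  destruct (Hoo (fun n => coset_cover (fun _ => snd (f n)))) as [Bs [HBs Hcov]].
  { intro n. apply coset_cover_open_cover. intros _; apply Hf. }
  exists Bs. split; [|exact Hcov].
  intro n. destruct (HBs n) as [Hdis [Hop Href]]. split; [exact Hdis | split; [exact Hop|]].
  intros S HS. destruct (Href S HS) as [T [[x ->] HST]].
  exists (lcoset G x (fst (f n))). split.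
  - apply (proj1 (Hf n)). exists x. intro; tauto.
  - intros y Sy. destruct (HST y Sy) as [u [Hu ->]]. exists u. split; auto.
    apply (proj2 (proj2 (Hf n))); auto.
Qed.

Lemma open_covers_shrink (A : nat -> family G) :
  (forall n, open_cover G (A n)) ->
  exists W V : nat -> G -> set G, forall n x,
    A n (W n x) /\ open_nbd_e (V n x) /\
    forall a b, V n x a -> V n x b -> W n x ((x * a) * b).
Proof.
  intros HA.
  assert (Hc : forall p : nat * G, exists q : set G * set G,
    A (fst p) (fst q) /\ open_nbd_e (snd q) /\
    forall a b, snd q a -> snd q b -> fst q ((snd p * a) * b)).
  { intros [n x]. destruct (HA n) as [Ho Hcov]. destruct (Hcov x) as [W [AW Wx]].
    destruct (nbd_triple x W (Ho W AW) Wx) as [V [HV HVW]].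
    exists (W, V); simpl; auto. }
  destruct (functional_choice _ Hc) as [f Hf].
  exists (fun n x => fst (f (n, x))), (fun n x => snd (f (n, x))).
  intros n x. apply (Hf (n, x)).
Qed.

Lemma list_coset_points (L : list (set G)) (V : G -> set G) :
  (forall S, In S L -> coset_cover V S) ->
  exists P, forall S, In S L -> exists x, In x P /\ S = lcoset G x (V x).
Proof.
  induction L as [|S0 L IH]; intros H.
  - exists []; intros S [].
  - destruct IH as [P HP]. { intros; apply H; simpl; auto. }
    destruct (H S0) as [x0 Hx0]; simpl; auto.
    exists (x0 :: P). intros S [<-|HS].
    + exists x0; simpl; auto.
    + destruct (HP S HS) as [x [? ?]]. exists x; simpl; auto.
Qed.

Lemma Hurewicz_coset_points (V : nat -> G -> set G) :
  Hurewicz G -> (forall n x, open_nbd_e (V n x)) ->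
  exists P : nat -> list G, forall y, exists N, forall n, N <= n ->
    exists x, In x (P n) /\ lcoset G x (V n x) y.
Proof.
  intros HG HV.
  destruct (HG (fun n => coset_cover (V n))) as [F [HF1 HF2]].
  { intro n. apply coset_cover_open_cover, HV. }
  destruct (functional_choice _ (fun n => list_coset_points (F n) (V n) (HF1 n)))
    as [P HP].
  exists P. intro y. destruct (HF2 y) as [N HN]. exists N. intros n Hn.
  destruct (HN n Hn) as [S [HS Sy]]. destruct (HP n S HS) as [x [Hx ->]].
  exists x; auto.
Qed.

(* Apply S_c(O_nbd, O) to each subsequence U(N,k), k in nat, of a
   pairing of nat with nat x nat, and keep only the members meeting X. *)
Lemma Sc_nbd_eventually (U : nat -> set G) (X : nat -> set G) :
  Sc G (O_nbd G) (open_cover G) -> (forall n, nbd_e G (U n)) ->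
  (forall y, exists N, forall n, N <= n -> X n y) ->
  exists Bs : nat -> family G,
    (forall n, pairwise_disjoint G (Bs n) /\ (forall S, Bs n S -> open G S) /\
       refines G (Bs n) (OU G (U n)) /\ (forall S, Bs n S -> exists z, S z /\ X n z)) /\
    open_cover G (fun S => exists n, Bs n S).
Proof.
  intros Hnbd HU HX.
  assert (HB : forall N, exists Bs : nat -> family G,
    (forall k, pairwise_disjoint G (Bs k) /\ (forall S, Bs k S -> open G S) /\
       refines G (Bs k) (OU G (U (to_nat (N, k))))) /\
    open_cover G (fun S => exists k, Bs k S)).
  { intro N. apply Hnbd. intro k. exists (U (to_nat (N, k))). split; [apply HU|tauto]. }
  destruct (functional_choice _ HB) as [BB HBB]. clear HB.
  exists (fun n S => BB (fst (of_nat n)) (snd (of_nat n)) S /\ exists z, S z /\ X n z).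
  split.
  - intro n. destruct (of_nat n) as [N k] eqn:Hd. simpl.
    assert (Hn : to_nat (N, k) = n) by (rewrite <- Hd; apply cancel_to_of).
    destruct (HBB N) as [Hk _]. destruct (Hk k) as [Hdis [Hop Href]].
    rewrite Hn in Href. split; [|split; [|split]].
    + intros S1 S2 [HS1 _] [HS2 _]. apply Hdis; auto.
    + intros S [HS _]; auto.
    + intros S [HS _]; auto.
    + intros S [_ Hz]; exact Hz.
  - split.
    + intros S [n [HS _]]. destruct (HBB (fst (of_nat n))) as [Hk _].
      apply (Hk (snd (of_nat n))); auto.
    + intro y. destruct (HX y) as [N HN].
      destruct (HBB N) as [_ [_ Hcov]]. destruct (Hcov y) as [S [[k HS] Sy]].
      exists S. split; auto. exists (to_nat (N, k)).
      rewrite cancel_of_to. cbn [fst snd]. split; auto.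
      exists y. split; auto. apply HN.
      pose proof (to_nat_non_decreasing N k). lia.
Qed.

Lemma Sc_open_of_Sc_nbd :
  Hurewicz G -> Sc G (O_nbd G) (open_cover G) -> Sc G (open_cover G) (open_cover G).
Proof.
  intros HG Hnbd A HA.
  destruct (open_covers_shrink A HA) as [W [V HWV]].
  destruct (Hurewicz_coset_points V HG (fun n x => proj1 (proj2 (HWV n x)))) as [P HP].
  set (V' := fun n a => forall x, In x (P n) -> V n x a).
  assert (HV' : forall n, open_nbd_e (V' n)).
  { intro n. split.
    - apply open_list_inter. intro x. apply (HWV n x).
    - intros x _. apply (HWV n x). }
  destruct (functional_choice _ (fun n => nbd_quotient (V' n) (HV' n))) as [U HU].
  destruct (Sc_nbd_eventually U (fun n y => exists x, In x (P n) /\ lcoset G x (V n x) y)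
              Hnbd) as [Bs [HBs Hcov]]; [|exact HP|].
  { intro n. destruct (HU n) as [[HUo HUe] _]. exists (U n); auto. }
  exists Bs. split; [|exact Hcov].
  intro n. destruct (HBs n) as [Hdis [Hop [Href Hmeet]]].
  split; [exact Hdis | split; [exact Hop|]].
  (* S inside x'*U n and meeting x*V n x lies in x*V*V, inside W n x. *)
  intros S HS. destruct (Hmeet S HS) as [z [Sz [x [Hx [a [Va ->]]]]]].
  destruct (Href S HS) as [T [[x' HT] HST]].
  exists (W n x). split; [apply HWV|].
  intros v Sv.
  destruct (lcoset_quotient x' (x * a) v (U n)) as [u0 [u [Uu0 [Uu ->]]]];
    [apply HT, HST, Sz | apply HT, HST, Sv |].
  apply (HWV n x); auto. apply (proj2 (HU n)); auto.
Qed.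

End TopGroupFacts.

Theorem theorem2p5 (G : TopGroup) (HG : Hurewicz G) :
  Sc G (O_nbd G) (open_cover G) <-> Sc G (open_cover G) (open_cover G).
Proof.
  split.
  - apply Sc_open_of_Sc_nbd, HG.
  - apply Sc_nbd_of_Sc_open.
Qed.
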